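(* Let $M$ be a module over a ring $R$ and $r\in R$. Then $\sigma_r=\delta_S$ for some $S\subseteq M$ if and only if $r$ is a multiplicative identity for $M$, i.e. $ru=u$ for all $u\in M$.
   Context: $\sigma_r:\mathcal{P}(M)\to\mathcal{P}(M)$ is $\sigma_r(X)=\{ru: u\in X\}$. For $S\subseteq M$, the dilation is $\delta_S(X)=X\oplus S=\{x+s : x\in X, s\in S\}$. *)

From HB Require Import structures.
From mathcomp Require Import all_boot all_order all_algebra.
Set Implicit Arguments. Unset Strict Implicit. Unset Printing Implicit Defensive.
Import GRing.Theory.
Local Open Scope ring_scope.

Definition scale_map (R : pzRingType) (M : lmodType R) (r : R)
  (X : M -> Prop) : M -> Prop :=
  fun y => exists u, X u /\ y = r *: u.

Definition dilation (R : pzRingType) (M : lmodType R) (S : M -> Prop)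
  (X : M -> Prop) : M -> Prop :=
  fun y => exists x s, X x /\ S s /\ y = x + s.

From HB Require Import structures.
From mathcomp Require Import all_boot all_order all_algebra.
From Stdlib Require Import FunctionalExtensionality PropExtensionality.
Import GRing.Theory.
Local Open Scope ring_scope.

(* Since sigma_r fixes {0}, an S with sigma_r = delta_S satisfies {0} (+) S = {0}, so
   S is contained in {0}; then r u, which lies in sigma_r {u} = {u} (+) S, equals u.
   Conversely delta_{0} is the identity, and so is sigma_r when r acts as 1. *)

Section ScaleMapDilation.

Variables (R : pzRingType) (M : lmodType R).

Lemma dilation_zero : dilation (fun s : M => s = 0) = id.
Proof.
apply: functional_extensionality => X; apply: functional_extensionality => y.
apply: propositional_extensionality; split.
- by move=> [x [s [Xx [-> ->]]]]; rewrite addr0.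
- by move=> Xy; exists y, 0; rewrite addr0.
Qed.

Lemma scale_map_id (r : R) : (forall u : M, r *: u = u) -> scale_map (M := M) r = id.
Proof.
move=> r_id; apply: functional_extensionality => X.
apply: functional_extensionality => y.
apply: propositional_extensionality; split.
- by move=> [u [Xu ->]]; rewrite r_id.
- by move=> Xy; exists y; rewrite r_id.
Qed.

Lemma scale_map_dilation_support {r : R} {S : M -> Prop} :
  scale_map r = dilation S -> forall s, S s -> s = 0.
Proof.
move=> sigma_delta s Ss.
have : dilation S (fun x => x = 0) s by exists 0, s; rewrite add0r.
by rewrite -sigma_delta => -[u [-> ->]]; rewrite scaler0.
Qed.

Lemma scale_map_dilation_id (r : R) (S : M -> Prop) :
  scale_map r = dilation S -> forall u : M, r *: u = u.
Proof.
move=> sigma_delta u.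
have : scale_map r (fun x => x = u) (r *: u) by exists u.
rewrite sigma_delta => -[x [s [-> [Ss ->]]]].
by rewrite (scale_map_dilation_support sigma_delta _ Ss) addr0.
Qed.

End ScaleMapDilation.

Theorem mainTheorem14 (R : pzRingType) (M : lmodType R) (r : R) :
  (exists S : M -> Prop, scale_map r = dilation S) <->
  (forall u : M, r *: u = u).
Proof.
split.
- by move=> [S sigma_delta]; exact: scale_map_dilation_id sigma_delta.
- by move=> r_id; exists (fun s => s = 0); rewrite dilation_zero scale_map_id.
Qed.
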